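(* Let $\vartheta$ be the random period doubling substitution on $\{a,b\}$, $\vartheta\colon a\mapsto\{ab,ba\},\ b\mapsto\{aa\}$, and $X_\vartheta$ its RS-subshift. Then $\operatorname{Aut}(X_\vartheta)$ contains a subgroup isomorphic to the automorphism group $\operatorname{Aut}(X_2)$ of the full shift $X_2=\{0,1\}^{\mathbb Z}$.
   Context: A random substitution $\vartheta$ is extended to words by $\vartheta(u_0\cdots u_n)=\vartheta(u_0)\cdots\vartheta(u_n)$ (all concatenations of choices) and iterated. A word is legal if it is a subword of some word in $\vartheta^p(c)$ for a letter $c$ and $p\ge0$. The RS-subshift $X_\vartheta\subseteq\{a,b\}^{\mathbb Z}$ is the set of bi-infinite sequences all of whose finite subwords are legal, with the shift $\sigma(x)_i=x_{i+1}$; $\operatorname{Aut}(X)$ denotes the group of shift-commuting homeomorphisms of a subshift $X$. *)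

From HB Require Import structures.
From mathcomp Require Import all_boot all_order all_algebra.
Set Implicit Arguments. Unset Strict Implicit. Unset Printing Implicit Defensive.
Import GRing.Theory Num.Theory.

Inductive letter := a | b.

Definition letter_eqb (x y : letter) : bool :=
  match x, y with a, a | b, b => true | _, _ => false end.
Lemma letter_eqP : Equality.axiom letter_eqb.
Proof. by case; case; constructor. Qed.
HB.instance Definition _ := hasDecEq.Build letter letter_eqP.

Definition rsubst (A : Type) := A -> seq (seq A).

Fixpoint rs_word (A : Type) (th : rsubst A) (u : seq A) : seq (seq A) :=
  match u with
  | [::] => [:: [::]]
  | c :: u' => [seq x ++ y | x <- th c, y <- rs_word th u']
  end.

Definition rs_set (A : Type) (th : rsubst A) (S : seq (seq A)) : seq (seq A) :=
  flatten (map (rs_word th) S).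

Definition rs_pow (A : Type) (th : rsubst A) (p : nat) (c : A) : seq (seq A) :=
  iter p (rs_set th) [:: [:: c]].

Definition legal (A : eqType) (th : rsubst A) (w : seq A) : Prop :=
  exists (c : A) (p : nat) (v : seq A), v \in rs_pow th p c /\ infix w v.

Local Open Scope ring_scope.

Definition subword (A : Type) (x : int -> A) (i : int) (n : nat) : seq A :=
  mkseq (fun k => x (i + k%:Z)) n.

Definition RS_subshift (A : eqType) (th : rsubst A) (x : int -> A) : Prop :=
  forall (i : int) (n : nat), legal th (subword x i n).

Definition full_shift (A : Type) (x : int -> A) : Prop := True.

Definition shift (A : Type) (x : int -> A) : int -> A := fun i => x (i + 1).

(* Continuity on X (subspace of the product topology of discrete spaces),
   unfolded through the cylinder-set basis: the values of f x on the window
   [-n,n] are determined by the values of x on some window [-m,m]. *)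
Definition agree_on (A : Type) (n : nat) (x y : int -> A) : Prop :=
  forall i : int, `|i| <= n%:Z -> x i = y i.

Definition continuous_on (A B : Type) (X : (int -> A) -> Prop)
    (f : (int -> A) -> (int -> B)) : Prop :=
  forall x, X x -> forall n : nat, exists m : nat,
    forall y, X y -> agree_on m x y -> agree_on n (f x) (f y).

Definition is_aut (A : Type) (X : (int -> A) -> Prop)
    (f : (int -> A) -> (int -> A)) : Prop :=
  [/\ (forall x, X x -> X (f x)),
      (forall x, X x -> f (shift x) = shift (f x)),
      continuous_on X f &
      exists g : (int -> A) -> (int -> A),
        [/\ (forall x, X x -> X (g x)),
            continuous_on X g,
            (forall x, X x -> g (f x) = x) &
            (forall x, X x -> f (g x) = x)]].

Definition theta_pd : rsubst letter :=
  fun c => match c with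
           | a => [:: [:: a; b]; [:: b; a]]
           | b => [:: [:: a; a]]
           end.

(* Markers aaab (ab|ba) (ab|ba) baaa never overlap, and each carries two bits
   in its dominoes (ba = 1, ab = 0).  A run of markers at distance 12 is a
   conveyor belt: reading the upper dominoes rightwards and the lower ones back
   leftwards gives a bi-infinite binary sequence from every slot.  An
   automorphism phi of the full shift acts on X_theta by rewriting each slot
   with the bit at 0 of phi applied to the belt read from that slot; this is a
   shift-commuting, continuous action since a belt is read locally.  It stays
   in X_theta because ab and ba are both in theta(a) and the factor bb inside
   every marker forces its dominoes to be whole blocks of a theta-image.  The
   action is faithful because X_theta contains, for every beta, markers at all
   multiples of 12 whose belt is beta, a configuration that is legal by
   self-similarity. *)

From mathcomp Require Import all_boot all_order all_algebra zify.
From Stdlib Require Import FunctionalExtensionality.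
Set Implicit Arguments. Unset Strict Implicit. Unset Printing Implicit Defensive.
Import Order.TTheory GRing.Theory Num.Theory.

Section RandomSubstitution.
Variables (A : eqType) (th : rsubst A).

Lemma rs_pow_succ p c v :
  v \in rs_pow th p.+1 c <-> exists2 u, u \in rs_pow th p c & v \in rs_word th u.
Proof.
rewrite /rs_pow iterS; split.
- by case/flattenP => _ /mapP [u hu ->] hv; exists u.
- by case=> u hu hv; apply/flattenP; exists (rs_word th u); first exact: map_f.
Qed.

Lemma rs_word_cat u1 u2 v1 v2 :
  v1 \in rs_word th u1 -> v2 \in rs_word th u2 -> v1 ++ v2 \in rs_word th (u1 ++ u2).
Proof.
elim: u1 v1 => [|c u1 IH] v1 /=; first by rewrite inE => /eqP->.
case/allpairsP => [[w1 w2] /= [h1 h2 ->]] hv2.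
by rewrite -catA; apply: allpairs_f => //; apply: IH.
Qed.

Lemma legal_infix u w : infix u w -> legal th w -> legal th u.
Proof.
by move=> uw [c [p [v [hv wv]]]]; exists c, p, v; split => //; exact: infix_trans uw wv.
Qed.

Hypothesis th_neq0 : forall c, th c != [::].

Lemma rs_word_neq0 u : exists v, v \in rs_word th u.
Proof.
elim: u => [|c u [v hv]]; first by exists [::]; rewrite inE.
case E: (th c) (th_neq0 c) => [|w ws] // _.
by exists (w ++ v) => /=; apply: allpairs_f => //; rewrite E mem_head.
Qed.

Lemma legal_rs_word u v : legal th u -> v \in rs_word th u -> legal th v.
Proof.
case=> c [p [w [hw /infixP [s [t ew]]]]] hv; subst w.
have [s' hs'] := rs_word_neq0 s; have [t' ht'] := rs_word_neq0 t.
exists c, p.+1, (s' ++ v ++ t'); split; last exact: infix_infix.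
by apply/rs_pow_succ; exists (s ++ u ++ t) => //; do 2!apply: rs_word_cat => //.
Qed.

End RandomSubstitution.

Section ConstantLengthTwo.
Variables (A : eqType) (th : rsubst A) (x0 : A).
Hypothesis size_th : forall c u, u \in th c -> size u = 2.

Lemma rs_wordP u v : reflect
  (size v = 2 * size u /\ forall t, t < size u ->
     [:: nth x0 v (2 * t); nth x0 v (2 * t).+1] \in th (nth x0 u t))
  (v \in rs_word th u).
Proof.
apply: (iffP idP).
- elim: u v => [|c u IH] v /=; first by rewrite inE => /eqP->.
  case/allpairsP => [[w v'] /= [hw hv' ->]].
  have [sv' blocks] := IH _ hv'; have sw := size_th hw.
  split=> [|[|t] ht]; first by rewrite size_cat sw sv' mulnS.
  + by rewrite !nth_cat sw; case: w sw hw => [|? [|? []]].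
  + by rewrite !nth_cat sw mulnS -addnS !addKn; apply: blocks.
- elim: u v => [|c u IH] v /= [sv blocks]; first by case: v sv {blocks}; rewrite ?inE.
  rewrite -(cat_take_drop 2 v); apply: allpairs_f.
  + have := blocks 0%N isT; rewrite muln0.
    by case: v sv {blocks} => [|v0 [|v1 v']] //= sv; [lia | rewrite take0].
  + apply: IH; split=> [|t ht]; first by rewrite size_drop sv mulnS addKn.
    by rewrite !nth_drop; have := blocks t.+1 ht; rewrite mulnS.
Qed.

End ConstantLengthTwo.

Lemma size_theta_pd c u : u \in theta_pd c -> size u = 2.
Proof. by case: c; rewrite !inE; [case/orP|] => /eqP->. Qed.

Lemma theta_pd_neq0 c : theta_pd c != [::].
Proof. by case: c. Qed.

Lemma theta_pd_rev c x y : [:: x; y] \in theta_pd c -> [:: y; x] \in theta_pd c.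
Proof. by case: c; case: x; case: y. Qed.

Lemma bb_notin_theta_pd c : [:: b; b] \notin theta_pd c.
Proof. by case: c. Qed.

(* All words of length at most 2 occur in abba, in theta^2(b), or in abaa, in theta^2(a). *)
Lemma legal_theta_pd_short w : size w <= 2 -> legal theta_pd w.
Proof.
have abba : legal theta_pd [:: a; b; b; a] by exists b, 2, [:: a; b; b; a].
case: w => [|x [|y [|? ?]]] // _.
- exact: legal_infix abba.
- by apply: legal_infix abba; case: x.
- case: x; case: y; try exact: legal_infix abba.
  by exists a, 2, [:: a; b; a; a].
Qed.

Lemma odd_bb_rs_word u v q : v \in rs_word theta_pd u -> q.+1 < size v ->
  nth a v q = b -> nth a v q.+1 = b -> odd q.
Proof.
case/(rs_wordP a size_theta_pd) => sv blocks ltq vq vq1; apply: contraT => even_q.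
have eq : q = 2 * q./2 by rewrite mul2n even_halfK.
have := blocks q./2; rewrite -eq vq vq1 (negPf (bb_notin_theta_pd _)).
by apply; rewrite -(ltn_pmul2l (isT : 0 < 2)) -eq -sv ltnW.
Qed.

Lemma rs_word_swap u v v' : v \in rs_word theta_pd u -> size v' = size v ->
  (forall t, t < size u -> [:: nth a v' (2 * t); nth a v' (2 * t).+1] \in
     [:: [:: nth a v (2 * t); nth a v (2 * t).+1]; [:: nth a v (2 * t).+1; nth a v (2 * t)]]) ->
  v' \in rs_word theta_pd u.
Proof.
case/(rs_wordP a size_theta_pd) => sv blocks sv' swapped.
apply/(rs_wordP a size_theta_pd); split=> [|t lt_tu]; first by rewrite sv'.
by move: (swapped t lt_tu); rewrite !inE => /orP[] /eqP->; last apply: theta_pd_rev; apply: blocks.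
Qed.

Lemma nth_cat_mid (T : Type) (x0 : T) s w t j :
  j < size w -> nth x0 (s ++ w ++ t) (size s + j) = nth x0 w j.
Proof. by move=> lt_jw; rewrite nth_cat ltnNge leq_addr addKn nth_cat lt_jw. Qed.

Lemma nth_cat_mid_neq (T : eqType) (x0 : T) s w w' t m : size w' = size w ->
  nth x0 (s ++ w' ++ t) m != nth x0 (s ++ w ++ t) m -> exists2 j, j < size w & m = size s + j.
Proof.
move=> sw'; rewrite !nth_cat sw'; case: ltnP => [_|le_sm]; first by rewrite eqxx.
by case: ltnP => [lt _|_]; [exists (m - size s); lia | rewrite eqxx].
Qed.

Definition bb_at (w : seq letter) q :=
  [&& q.+1 < size w, nth a w q == b & nth a w q.+1 == b].

Definition swapped_at (w w' : seq letter) k :=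
  [&& k.+1 < size w, nth a w' k == nth a w k.+1 & nth a w' k.+1 == nth a w k].

Lemma rs_word_swap_factor u s w w' t : s ++ w ++ t \in rs_word theta_pd u -> size w' = size w ->
  (forall j, j < size w -> nth a w' j != nth a w j ->
     exists k q, [/\ j \in [:: k; k.+1], swapped_at w w' k, bb_at w q & odd (k + q)]) ->
  s ++ w' ++ t \in rs_word theta_pd u.
Proof.
move=> hvu sw' swaps; apply: (rs_word_swap hvu); first by rewrite !size_cat sw'.
move=> t0 lt_t0; set v := s ++ w ++ t; set v' := s ++ w' ++ t.
have [|changed] := boolP [&& nth a v' (2 * t0) == nth a v (2 * t0)
                          & nth a v' (2 * t0).+1 == nth a v (2 * t0).+1].
  by case/andP => /eqP-> /eqP->; rewrite mem_head.
have [m m_in diff_m] : exists2 m, m \in [:: 2 * t0; (2 * t0).+1] & nth a v' m != nth a v m.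
  by move: changed; rewrite negb_and => /orP[]; [exists (2 * t0) | exists (2 * t0).+1];
     rewrite ?inE ?eqxx ?orbT.
have [j lt_jw em] := nth_cat_mid_neq sw' diff_m; subst m.
rewrite !nth_cat_mid ?sw' // in diff_m.
have [k [q [j_in /and3P [lt_k /eqP w'k /eqP w'k1] /and3P [lt_q /eqP wq /eqP wq1] odd_kq]]] :=
  swaps j lt_jw diff_m.
have odd_sq : odd (size s + q).
  apply: (odd_bb_rs_word hvu); rewrite /v ?size_cat -?addnS ?nth_cat_mid ?(ltnW lt_q) //.
  by rewrite leq_add2l ltn_addr.
have ek : size s + k = 2 * t0 by move: m_in j_in; rewrite !inE; lia.
by rewrite -ek -addnS !nth_cat_mid ?sw' ?(ltnW lt_k) // w'k w'k1 !inE eqxx orbT.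
Qed.

(* A factor bb never lies inside one block of a theta_pd-image, so it fixes the
   parity of the block boundaries: dominoes at the other parity are blocks, and
   reversing them keeps the word in the image. *)
Lemma legal_swap w w' : legal theta_pd w -> size w' = size w ->
  (forall j, j < size w -> nth a w' j != nth a w j ->
     exists k q, [/\ j \in [:: k; k.+1], swapped_at w w' k, bb_at w q & odd (k + q)]) ->
  legal theta_pd w'.
Proof.
move=> legal_w sw' swaps; case: legal_w => c [[|p] [v [hv wv]]].
  suff -> : w' = w by exists c, 0%N, v.
  apply: (@eq_from_nth _ a) => // j; rewrite sw' => lt_jw; apply/eqP; apply: contraT.
  case/(swaps j lt_jw) => k [q [_ _ /and3P [lt_q _ _] _]].
  by move: (size_infix wv) hv; rewrite inE => + /eqP ev; rewrite ev /=; lia.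
have [u hu hvu] := (rs_pow_succ _ _ _ _).1 hv.
case/infixP: wv => s [t ev]; subst v.
exists c, p.+1, (s ++ w' ++ t); split; last exact: infix_infix.
by apply/rs_pow_succ; exists u => //; apply: rs_word_swap_factor hvu sw' swaps.
Qed.

Local Open Scope ring_scope.

Section Subword.
Variables (A : Type) (x0 : A) (z : int -> A).

Lemma size_subword i n : size (subword z i n) = n.
Proof. exact: size_mkseq. Qed.

Lemma nth_subword i n j : (j < n)%N -> nth x0 (subword z i n) j = z (i + j%:Z).
Proof. exact: nth_mkseq. Qed.

Lemma subword_cat i m n : subword z i (m + n) = subword z i m ++ subword z (i + m%:Z) n.
Proof.
rewrite /subword /mkseq iotaD map_cat add0n.
have -> : iota m n = map (addn m) (iota 0 n) by rewrite -iotaDl addn0.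
by rewrite -map_comp; congr (_ ++ _); apply: eq_map => k /=; congr z; lia.
Qed.

End Subword.

Lemma infix_subword (A : eqType) (z : int -> A) i (e n N : nat) :
  (e + n <= N)%N -> infix (subword z (i + e%:Z) n) (subword z i N).
Proof.
by move=> len; rewrite -(subnKC len) !subword_cat -catA infix_infix.
Qed.

Section Desubstitution.
Variables (A : eqType) (th : rsubst A) (x0 : A).
Hypothesis size_th : forall c u, u \in th c -> size u = 2%N.
Hypothesis th_neq0 : forall c, th c != [::].
Hypothesis legal_short : forall w, (size w <= 2)%N -> legal th w.

(* A window of length n of z lies in the image of a window of length about n/2
   of z', so legality follows by induction on n. *)
Lemma RS_subshift_of_desubstitution (Y : (int -> A) -> Prop) :
  (forall z, Y z -> exists2 z', Y z' & exists o : int, forall k : int,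
      [:: z (o + 2 * k); z (o + 2 * k + 1)] \in th (z' k)) ->
  forall z, Y z -> RS_subshift th z.
Proof.
move=> desubst; suff legal_window n z i : Y z -> legal th (subword z i n).
  by move=> z hz i n; apply: legal_window.
elim/ltn_ind: n z i => n IH z i hz.
have [|long] := leqP n 2; first by move=> short; apply: legal_short; rewrite size_subword.
have [z' hz' [o ho]] := desubst z hz.
pose k := ((i - o) %/ 2)%Z; pose e := `|((i - o) %% 2)%Z|%N; pose m := (n + 2)./2%N.
have ei : i = o + 2 * k + e%:Z by have := divz_eq (i - o) 2; rewrite /e /k; lia.
have img : subword z (o + 2 * k) (2 * m) \in rs_word th (subword z' k m).
  apply/(rs_wordP x0 size_th); rewrite !size_subword; split=> // t ht.
  rewrite !nth_subword ?ht //; try lia.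
  have -> : o + 2 * k + (2 * t)%N%:Z = o + 2 * (k + t%:Z) by lia.
  have -> : o + 2 * k + (2 * t).+1%:Z = o + 2 * (k + t%:Z) + 1 by lia.
  exact: ho.
have lt_mn : (m < n)%N by rewrite /m; lia.
apply: legal_infix (legal_rs_word th_neq0 (IH m lt_mn z' k hz') img).
by rewrite ei; apply: infix_subword; rewrite /e /m; lia.
Qed.

End Desubstitution.

Definition marker (x : int -> letter) (p : int) : bool :=
  [&& x (p + 0%Z) == a, x (p + 1%Z) == a, x (p + 2%Z) == a, x (p + 3%Z) == b,
      x (p + 4%Z) != x (p + 5%Z), x (p + 6%Z) != x (p + 7%Z), x (p + 8%Z) == b,
      x (p + 9%Z) == a, x (p + 10%Z) == a & x (p + 11%Z) == a].

Lemma eq_marker x y p :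
  (forall k : nat, (k < 12)%N -> x (p + k%:Z) = y (p + k%:Z)) -> marker x p = marker y p.
Proof. by move=> xy; rewrite /marker !xy. Qed.

Lemma marker_far x p p' : marker x p -> marker x p' -> p != p' -> (p + 9 <= p') || (p' + 9 <= p).
Proof.
wlog lt_pp' : p p' / p < p' => [hwlog mp mp' neq|mp mp' _].
  case: (ltrP p p') => [lt|le]; first exact: hwlog.
  by rewrite orbC; apply: hwlog; rewrite // 1?eq_sym // lt_neqAle eq_sym neq.
have [d ep'] : exists d : nat, p' = p + d%:Z by exists `|p' - p|%N; lia.
subst p'.
case: (leqP 9 d) => [|lt_d9]; first by lia.
have d_neq0 : d != 0%N by lia.
have shift_d k : x (p + d%:Z + k%:Z) = x (p + (d + k)%N%:Z) by rewrite -addrA -PoszD.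
move: mp'; rewrite /marker !shift_d; move: mp; rewrite /marker.
case: d {shift_d lt_pp'} lt_d9 d_neq0 => [|[|[|[|[|[|[|[|[|d]]]]]]]]] //= _ _;
  rewrite ?addSn ?add0n => mp mp'; repeat match goal with
    | H : is_true (_ && _) |- _ => case/andP: H => ? ?
    | H : is_true (_ == _) |- _ => move/eqP: H => ?
    | H : is_true (_ != _) |- _ => move/eqP: H => ?
    end; congruence.
Qed.

Lemma marker_near x p q : marker x p -> q != p -> p - 8 <= q <= p + 8 -> marker x q = false.
Proof.
move=> mp neq /andP [lo hi]; apply: contraNF (neq) => mq.
by move: (marker_far mq mp neq); lia.
Qed.

(* A slot (p, true) is the domino at p + 4 of the marker at p, a slot (p, false)
   the domino at p + 6; it holds the bit 1 when it reads ba.  Along a run of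
   markers at distance 12 the slots form a conveyor belt: rightwards on the
   upper dominoes, leftwards on the lower ones, turning at the ends of the run. *)
Definition slot_succ x (s : int * bool) : int * bool :=
  if s.2 then (if marker x (s.1 + 12) then (s.1 + 12, true) else (s.1, false))
  else (if marker x (s.1 - 12) then (s.1 - 12, false) else (s.1, true)).

Definition slot_pred x (s : int * bool) : int * bool :=
  if s.2 then (if marker x (s.1 - 12) then (s.1 - 12, true) else (s.1, false))
  else (if marker x (s.1 + 12) then (s.1 + 12, false) else (s.1, true)).

Definition walk x s (j : int) : int * bool :=
  match j with Posz n => iter n (slot_succ x) s | Negz n => iter n.+1 (slot_pred x) s end.

Definition slot_bit x (s : int * bool) : bool := x (s.1 + (if s.2 then 4%Z else 6%Z)) == b.

Definition belt x s : int -> bool := fun j => slot_bit x (walk x s j).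

Section Belt.
Variable x : int -> letter.

Lemma slot_predK s : marker x s.1 -> slot_pred x (slot_succ x s) = s.
Proof.
case: s => p [] /= mp; rewrite /slot_succ /=.
- by case: ifP => m12; rewrite /slot_pred /= ?addrK ?mp ?m12.
- by case: ifP => m12; rewrite /slot_pred /= ?subrK ?mp ?m12.
Qed.

Lemma slot_succK s : marker x s.1 -> slot_succ x (slot_pred x s) = s.
Proof.
case: s => p [] /= mp; rewrite /slot_pred /=.
- by case: ifP => m12; rewrite /slot_succ /= ?subrK ?mp ?m12.
- by case: ifP => m12; rewrite /slot_succ /= ?addrK ?mp ?m12.
Qed.

Lemma marker_slot_succ s : marker x s.1 -> marker x (slot_succ x s).1.
Proof. by case: s => p [] mp; rewrite /slot_succ /=; case: ifP. Qed.

Lemma marker_slot_pred s : marker x s.1 -> marker x (slot_pred x s).1.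
Proof. by case: s => p [] mp; rewrite /slot_pred /=; case: ifP. Qed.

Lemma marker_walk s j : marker x s.1 -> marker x (walk x s j).1.
Proof.
move=> ms; case: j => n /=; elim: n => [|n IH] //=;
  by [apply: marker_slot_succ | apply: marker_slot_pred].
Qed.

Lemma walk_succ s j : marker x s.1 -> walk x s (j + 1) = slot_succ x (walk x s j).
Proof.
move=> ms; case: j => [n|[|n]].
- by have -> : Posz n + 1 = Posz n.+1 by lia.
- by rewrite /= slot_succK.
- have -> : Negz n.+1 + 1 = Negz n by rewrite !NegzE; lia.
  by rewrite [walk x s (Negz n.+1)]/= slot_succK // (marker_walk (Negz n) ms).
Qed.

Lemma walk_pred s j : marker x s.1 -> walk x s (j - 1) = slot_pred x (walk x s j).
Proof.
move=> ms; case: j => [[|n]|n].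
- by [].
- have -> : Posz n.+1 - 1 = Posz n by lia.
  by rewrite [walk x s (Posz n.+1)]/= slot_predK // (marker_walk (Posz n) ms).
- by have -> : Negz n - 1 = Negz n.+1 by rewrite !NegzE; lia.
Qed.

Lemma walk_add s i j : marker x s.1 -> walk x (walk x s j) i = walk x s (i + j).
Proof.
move=> ms; have mj := marker_walk j ms.
case: i => n; elim: n => [|n IH].
- by rewrite add0r.
- have -> : Posz n.+1 + j = Posz n + j + 1 by lia.
  by rewrite walk_succ // -IH.
- have -> : Negz 0 + j = j - 1 by rewrite NegzE; lia.
  by rewrite walk_pred.
- have -> : Negz n.+1 + j = Negz n + j - 1 by rewrite !NegzE; lia.
  rewrite walk_pred // -IH -walk_pred //.
  by have -> : Negz n - 1 = Negz n.+1 by rewrite !NegzE; lia.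
Qed.

Lemma belt_walk s j : marker x s.1 -> belt x (walk x s j) = fun i => belt x s (i + j).
Proof. by move=> ms; apply: functional_extensionality => i; rewrite /belt walk_add. Qed.

End Belt.

Lemma marker_shift x p : marker (shift x) p = marker x (p + 1).
Proof. by rewrite /marker /shift !(addrAC p _ 1). Qed.

Definition slot_translate (d : int) (s : int * bool) : int * bool := (s.1 + d, s.2).

Lemma slot_translateK d : cancel (slot_translate d) (slot_translate (- d)).
Proof. by case=> p t; rewrite /slot_translate /= addrK. Qed.

Lemma slot_translateNK d : cancel (slot_translate (- d)) (slot_translate d).
Proof. by case=> p t; rewrite /slot_translate /= subrK. Qed.

Lemma slot_succ_shift x s :
  slot_succ (shift x) s = slot_translate (-1) (slot_succ x (slot_translate 1 s)).
Proof.
case: s => p [] /=; rewrite /slot_succ /slot_translate /= !marker_shift.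
- by rewrite addrAC; case: ifP => _ /=; congr pair; lia.
- by rewrite addrAC; case: ifP => _ /=; congr pair; lia.
Qed.

Lemma slot_pred_shift x s :
  slot_pred (shift x) s = slot_translate (-1) (slot_pred x (slot_translate 1 s)).
Proof.
case: s => p [] /=; rewrite /slot_pred /slot_translate /= !marker_shift.
- by rewrite addrAC; case: ifP => _ /=; congr pair; lia.
- by rewrite addrAC; case: ifP => _ /=; congr pair; lia.
Qed.

Lemma walk_shift x s j :
  walk (shift x) s j = slot_translate (-1) (walk x (slot_translate 1 s) j).
Proof.
have iter_shift f g (n : nat) s' : (forall s, f s = slot_translate (-1) (g (slot_translate 1 s))) ->
    iter n f s' = slot_translate (-1) (iter n g (slot_translate 1 s')).
  by move=> fg; elim: n => [|n IH] /=; rewrite ?slot_translateK // IH fg slot_translateNK.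
by case: j => n; apply: iter_shift; [apply: slot_succ_shift | apply: slot_pred_shift].
Qed.

Lemma belt_shift x p t : belt (shift x) (p, t) = belt x (p + 1, t).
Proof.
apply: functional_extensionality => j; rewrite /belt walk_shift /slot_bit /shift /=.
by rewrite addrAC subrK.
Qed.

Definition domino_letter (bit second : bool) : letter := if bit (+) second then b else a.

(* Slot s of each marker in M is overwritten with the bit F s; as markers are at
   least 9 apart, at most one branch applies. *)
Definition write_slots (F : int * bool -> bool) (M : pred int) x (i : int) : letter :=
  if marker x (i - 4%Z) then
    (if M (i - 4%Z) then domino_letter (F (i - 4%Z, true)) false else x i)
  else if marker x (i - 5%Z) then
    (if M (i - 5%Z) then domino_letter (F (i - 5%Z, true)) true else x i)
  else if marker x (i - 6%Z) then
    (if M (i - 6%Z) then domino_letter (F (i - 6%Z, false)) false else x i)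
  else if marker x (i - 7%Z) then
    (if M (i - 7%Z) then domino_letter (F (i - 7%Z, false)) true else x i)
  else x i.

Lemma domino_letter_neq bit : domino_letter bit false != domino_letter bit true.
Proof. by case: bit. Qed.

Section WriteSlots.
Variables (F : int * bool -> bool) (M : pred int) (x : int -> letter).

Lemma write_slots_marker p (d : nat) : marker x p -> (4 <= d <= 7)%N ->
  write_slots F M x (p + d%:Z) =
  if M p then domino_letter (F (p, (d < 6)%N)) (odd d) else x (p + d%:Z).
Proof.
move=> mp /andP [d4 d7].
have off k : (4 <= k < d)%N -> marker x (p + d%:Z - k%:Z) = false.
  by case/andP=> k4 kd; apply: marker_near mp _ _; lia.
rewrite /write_slots.
by case: d d4 d7 off => [|[|[|[|[|[|[|[|d]]]]]]]] //= _ _ off; rewrite addrK mp ?off.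
Qed.

Lemma write_slots_out i : (forall p, marker x p -> ~ (p + 4 <= i <= p + 7)) ->
  write_slots F M x i = x i.
Proof.
move=> nocover; rewrite /write_slots.
by do 4![case: ifP => [mp|_]; first by case: (nocover _ mp); lia].
Qed.

Lemma write_slots_neq i : write_slots F M x i != x i ->
  exists p, [/\ marker x p, M p & p + 4 <= i <= p + 7].
Proof.
rewrite /write_slots; do 4![case: ifP => [mp|_]; first by case: ifP => Mp;
  rewrite ?eqxx // => _; eexists; split; [exact: mp | exact: Mp | lia]].
by rewrite eqxx.
Qed.

Lemma marker_write_slots_of p : marker x p -> marker (write_slots F M x) p.
Proof.
move=> mp.
have outside k : (k < 12)%N -> ~~ (4 <= k <= 7)%N -> write_slots F M x (p + k%:Z) = x (p + k%:Z).
  move=> k12 k47; apply: write_slots_out => p' mp' range.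
  have [ep|neq] := eqVneq p p'; first by subst p'; lia.
  by move: (marker_far mp mp' neq); lia.
move: (mp); rewrite /marker (write_slots_marker (d := 4) mp) // (write_slots_marker (d := 5) mp) //.
rewrite (write_slots_marker (d := 6) mp) // (write_slots_marker (d := 7) mp) // !outside //.
case: (M p) => // /and5P [-> -> -> -> /and5P [_ _ -> -> /andP [-> ->]]].
by rewrite !domino_letter_neq.
Qed.

Lemma marker_write_slots q : marker (write_slots F M x) q = marker x q.
Proof.
apply/idP/idP => [mq'|]; last exact: marker_write_slots_of.
apply: contraT => mq.
have agree : marker x q = marker (write_slots F M x) q.
  apply: eq_marker => k k12; apply/esym/write_slots_out => p mp range.
  have neq : p != q by apply: contraNneq mq => <-.
  by move: (marker_far (marker_write_slots_of mp) mq' neq); lia.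
by rewrite agree mq' in mq.
Qed.

Lemma walk_write_slots : walk (write_slots F M x) = walk x.
Proof.
have succE : slot_succ (write_slots F M x) = slot_succ x.
  by apply: functional_extensionality => s; rewrite /slot_succ !marker_write_slots.
have predE : slot_pred (write_slots F M x) = slot_pred x.
  by apply: functional_extensionality => s; rewrite /slot_pred !marker_write_slots.
apply: functional_extensionality => s; apply: functional_extensionality => j.
by rewrite /walk succE predE.
Qed.

Lemma slot_bit_write_slots s : marker x s.1 ->
  slot_bit (write_slots F M x) s = if M s.1 then F s else slot_bit x s.
Proof.
case: s => p [] mp; rewrite /slot_bit /=.
- by rewrite (write_slots_marker (d := 4) mp) //; case: (M p) => //; case: (F _).
- by rewrite (write_slots_marker (d := 6) mp) //; case: (M p) => //; case: (F _).
Qed.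

Lemma write_slots_ext G : (forall s, marker x s.1 -> F s = G s) ->
  write_slots F M x = write_slots G M x.
Proof.
move=> FG; apply: functional_extensionality => i; rewrite /write_slots.
by do 4![case: ifP => [m|_]; first by rewrite FG].
Qed.

Lemma domino_letter_slot_bit p (d : nat) : marker x p -> (4 <= d <= 7)%N ->
  domino_letter (slot_bit x (p, (d < 6)%N)) (odd d) = x (p + d%:Z).
Proof.
move=> /and5P [_ _ _ _ /and5P [n45 n67 _ _ _]].
case: d => [|[|[|[|[|[|[|[|d]]]]]]]] //= _; rewrite /slot_bit /domino_letter /=;
  by case: (x (p + 4%Z)) n45; case: (x (p + 5%Z)); case: (x (p + 6%Z)) n67; case: (x (p + 7%Z)).
Qed.

End WriteSlots.

Lemma write_slots_write_slots F G M x : write_slots F M (write_slots G M x) = write_slots F M x.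
Proof.
apply: functional_extensionality => i.
rewrite {1}/write_slots !marker_write_slots /write_slots.
case: (marker x (i - 4%Z)) => /=; first by case: (M _).
case: (marker x (i - 5%Z)) => /=; first by case: (M _).
case: (marker x (i - 6%Z)) => /=; first by case: (M _).
by case: (marker x (i - 7%Z)) => //=; case: (M _).
Qed.

Lemma write_slots_slot_bit M x : write_slots (slot_bit x) M x = x.
Proof.
apply: functional_extensionality => i; apply/eqP; apply: contraT => neq.
have [p [mp Mp range]] := write_slots_neq neq.
have [d [d47 ei]] : exists d : nat, (4 <= d <= 7)%N /\ i = p + d%:Z.
  by exists `|i - p|%N; split; lia.
by move: neq; rewrite ei write_slots_marker // Mp domino_letter_slot_bit // eqxx.
Qed.

Lemma morph_shift_translate (psi : (int -> bool) -> int -> bool) :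
  {morph psi : z / shift z} -> forall z j, psi (fun i => z (i + j)) = fun i => psi z (i + j).
Proof.
move=> psi_shift.
have iter_shift A n (z : int -> A) : iter n (@shift A) z = fun i => z (i + n%:Z).
  elim: n => [|n IH] /=; apply: functional_extensionality => i; first by rewrite addr0.
  by rewrite /shift IH; congr z; lia.
have psi_iter n z : psi (iter n (@shift _) z) = iter n (@shift _) (psi z).
  by elim: n => //= n IH; rewrite psi_shift IH.
move=> z [n|n]; first by rewrite -!iter_shift psi_iter.
pose w i := z (i + Negz n).
have zE : z = iter n.+1 (@shift _) w.
  by rewrite iter_shift; apply: functional_extensionality => i; rewrite /w NegzE; congr z; lia.
rewrite {2}zE psi_iter iter_shift; apply: functional_extensionality => i /=.
by congr (psi _ _); rewrite NegzE; lia.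
Qed.

Definition lift_aut (phi : (int -> bool) -> int -> bool) x : int -> letter :=
  write_slots (fun s => phi (belt x s) 0) predT x.

Lemma belt_lift_aut psi x s : {morph psi : z / shift z} -> marker x s.1 ->
  belt (lift_aut psi x) s = psi (belt x s).
Proof.
move=> psi_shift ms; apply: functional_extensionality => j.
rewrite /belt /lift_aut walk_write_slots slot_bit_write_slots ?marker_walk //=.
by rewrite -/(belt x (walk x s j)) belt_walk // morph_shift_translate // add0r.
Qed.

Lemma lift_aut_comp phi psi x : {morph psi : z / shift z} ->
  lift_aut (fun z => phi (psi z)) x = lift_aut phi (lift_aut psi x).
Proof.
move=> psi_shift; rewrite {2}/lift_aut write_slots_write_slots /lift_aut.
by apply: write_slots_ext => s ms; rewrite belt_lift_aut.
Qed.

Lemma lift_aut_id x : lift_aut id x = x.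
Proof. exact: write_slots_slot_bit. Qed.

Lemma lift_aut_shift phi x : lift_aut phi (shift x) = shift (lift_aut phi x).
Proof.
apply: functional_extensionality => i.
have Emarker (q : nat) : marker (shift x) (i - q%:Z) = marker x (i + 1 - q%:Z).
  by rewrite marker_shift; congr marker; lia.
have Ebelt (q : nat) t : belt (shift x) (i - q%:Z, t) = belt x (i + 1 - q%:Z, t).
  by rewrite belt_shift; congr (belt x (_, t)); lia.
by rewrite /lift_aut /write_slots !Emarker !Ebelt /shift.
Qed.

Lemma marker_local x y p : (forall i, p <= i <= p + 11 -> x i = y i) -> marker x p = marker y p.
Proof. by move=> xy; apply: eq_marker => k k12; apply: xy; lia. Qed.

Section StepLocality.
Variables (x y : int -> letter) (s : int * bool).
Hypothesis xy : forall i, `|i - s.1| <= 23 -> x i = y i.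

Lemma slot_succ_local : slot_succ x s = slot_succ y s.
Proof. by rewrite /slot_succ !(@marker_local x y) // => i range; apply: xy; lia. Qed.

Lemma slot_pred_local : slot_pred x s = slot_pred y s.
Proof. by rewrite /slot_pred !(@marker_local x y) // => i range; apply: xy; lia. Qed.

End StepLocality.

Lemma slot_succ_near x s : `|(slot_succ x s).1 - s.1| <= 12.
Proof. by rewrite /slot_succ; case: s.2; case: ifP => _ /=; lia. Qed.

Lemma slot_pred_near x s : `|(slot_pred x s).1 - s.1| <= 12.
Proof. by rewrite /slot_pred; case: s.2; case: ifP => _ /=; lia. Qed.

Lemma iter_local (f g : int * bool -> int * bool) (s : int * bool) (N : nat) :
  (forall s' : int * bool, `|s'.1 - s.1| <= (12 * N)%:Z -> f s' = g s') ->
  (forall s' : int * bool, `|(f s').1 - s'.1| <= 12) ->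
  forall n, (n <= N)%N -> iter n f s = iter n g s /\ `|(iter n f s).1 - s.1| <= (12 * n)%:Z.
Proof.
move=> fg f_near; elim=> [|n IH] le_nN /=; first by rewrite subrr.
have [E near] := IH (ltnW le_nN); rewrite E in near *.
have fgE : f (iter n g s) = g (iter n g s) by apply: fg; lia.
by have := f_near (iter n g s); rewrite fgE; split=> //; lia.
Qed.

Lemma walk_local x y (s : int * bool) (N : nat) :
  (forall i, `|i - s.1| <= (12 * N + 23)%:Z -> x i = y i) ->
  forall j, `|j| <= N%:Z -> walk x s j = walk y s j /\ `|(walk x s j).1 - s.1| <= (12 * N)%:Z.
Proof.
move=> xy [n|n] le_jN /=.
- have succE (s' : int * bool) : `|s'.1 - s.1| <= (12 * N)%:Z -> slot_succ x s' = slot_succ y s'.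
    by move=> near; apply: slot_succ_local => i ?; apply: xy; lia.
  have le_nN : (n <= N)%N by lia.
  have [E near] := iter_local succE (@slot_succ_near x) le_nN.
  by split=> //; lia.
- have predE (s' : int * bool) : `|s'.1 - s.1| <= (12 * N)%:Z -> slot_pred x s' = slot_pred y s'.
    by move=> near; apply: slot_pred_local => i ?; apply: xy; lia.
  have le_nN : (n < N)%N by rewrite NegzE in le_jN; lia.
  have [E near] := iter_local predE (@slot_pred_near x) le_nN.
  by move: E near => /= E near; split=> //; lia.
Qed.

Lemma belt_local x y (s : int * bool) (N : nat) :
  (forall i, `|i - s.1| <= (12 * N + 23)%:Z -> x i = y i) -> agree_on N (belt x s) (belt y s).
Proof.
move=> xy j le_jN; have [E near] := walk_local xy le_jN.
rewrite /belt /slot_bit E in near *; congr (_ == b); apply: xy.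
by case: (walk y s j).2; lia.
Qed.

Lemma uniform_modulus (P : int -> nat -> Prop) :
  (forall i m m', P i m -> (m <= m')%N -> P i m') -> (forall i, exists m, P i m) ->
  forall (lo : int) (N : nat), exists M, forall i, lo <= i <= lo + N%:Z -> P i M.
Proof.
move=> mono ex lo; elim=> [|N [M PM]].
  by have [m Pm] := ex lo; exists m => i range; have -> : i = lo by lia.
have [m Pm] := ex (lo + N.+1%:Z); exists (maxn M m) => i range.
have [le_iN|gt_iN] := lerP i (lo + N%:Z).
  by apply: mono (PM i _) (leq_maxl _ _); lia.
have -> : i = lo + N.+1%:Z by lia.
exact: mono Pm (leq_maxr _ _).
Qed.

Lemma lift_aut_continuous phi (X : (int -> letter) -> Prop) :
  continuous_on (@full_shift bool) phi -> continuous_on X (lift_aut phi).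
Proof.
move=> phi_cont x _ n.
pose P p m := forall t z, agree_on m (belt x (p, t)) z -> phi (belt x (p, t)) 0 = phi z 0.
have [M PM] : exists M, forall p, - (n + 7)%:Z <= p <= - (n + 7)%:Z + (2 * n + 7)%N%:Z -> P p M.
  apply: uniform_modulus => [p m m' Pm le_mm' t z agree|p].
    by apply: Pm => i ?; apply: agree; lia.
  have [m1 P1] := phi_cont (belt x (p, true)) I 0%N.
  have [m2 P2] := phi_cont (belt x (p, false)) I 0%N.
  exists (maxn m1 m2) => -[] z agree; [apply: (P1 z I) | apply: (P2 z I)] => //;
    by move=> i ?; apply: agree; lia.
exists (12 * M + 32 + n)%N => y _ xy i le_in.
have xy_near k : `|k - i| <= (12 * M + 32)%:Z -> x k = y k by move=> ?; apply: xy; lia.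
have Emarker (q : nat) : (q <= 7)%N -> marker x (i - q%:Z) = marker y (i - q%:Z).
  by move=> ?; apply: marker_local => k ?; apply: xy_near; lia.
have Ebelt (q : nat) t : (4 <= q <= 7)%N ->
    phi (belt x (i - q%:Z, t)) 0 = phi (belt y (i - q%:Z, t)) 0.
  move=> /andP [q4 q7]; apply: (PM (i - q%:Z)); first by lia.
  by apply: belt_local => k near; apply: xy_near; rewrite /= in near; lia.
by rewrite /lift_aut /write_slots !Emarker // !Ebelt // xy_near //; lia.
Qed.

Lemma legal_swap_subword (x y : int -> letter) lo (N : nat) :
  legal theta_pd (subword x lo N) ->
  (forall i : int, lo <= i < lo + N%:Z -> y i != x i -> exists k q : int,
     [/\ (i == k) || (i == k + 1), lo <= k /\ lo <= q, k + 1 < lo + N%:Z, q + 1 < lo + N%:Z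
       & [/\ y k = x (k + 1), y (k + 1) = x k, x q = b, x (q + 1) = b & odd `|q - k|]]) ->
  legal theta_pd (subword y lo N).
Proof.
move=> legal_x swaps; apply: (legal_swap legal_x); first by rewrite !size_subword.
move=> j; rewrite size_subword => lt_jN; rewrite !nth_subword // => neq.
have [|k [q [i_k [lo_k lo_q] k_in q_in [yk yk1 xq xq1 odd_kq]]]] := swaps _ _ neq; first lia.
have [k' ek] : exists k' : nat, k = lo + k'%:Z by exists `|k - lo|%N; lia.
have [q' eq] : exists q' : nat, q = lo + q'%:Z by exists `|q - lo|%N; lia.
have succE (m : nat) : lo + m%:Z + 1 = lo + m.+1%:Z by lia.
subst k q; rewrite !succE in yk yk1 xq1 k_in q_in.
exists k', q'; split; first by rewrite !inE; lia.
- by rewrite /swapped_at size_subword !nth_subword ?yk ?yk1 ?eqxx //; lia.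
- by rewrite /bb_at size_subword !nth_subword ?xq ?xq1 ?eqxx //; lia.
- lia.
Qed.

Lemma marker_bb x p : marker x p ->
  exists2 q : nat, q \in [:: 3; 5; 7]%N & x (p + q%:Z) = b /\ x (p + q.+1%:Z) = b.
Proof.
move=> /and5P [_ _ _ /eqP x3 /and5P [n45 n67 /eqP x8 _ _]].
case x4 : (x (p + 4%Z)); last by exists 3%N.
have x5 : x (p + 5%Z) = b by move: n45; rewrite x4; case: (x _).
case x6 : (x (p + 6%Z)); last by exists 5%N.
have x7 : x (p + 7%Z) = b by move: n67; rewrite x6; case: (x _).
by exists 7%N.
Qed.

Lemma write_slots_domino F M x p (d : nat) : marker x p -> d \in [:: 4; 6]%N ->
  let y := write_slots F M x in
  y (p + d%:Z) = x (p + d%:Z) /\ y (p + d.+1%:Z) = x (p + d.+1%:Z) \/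
  y (p + d%:Z) = x (p + d.+1%:Z) /\ y (p + d.+1%:Z) = x (p + d%:Z).
Proof.
move=> mp; have := marker_write_slots_of F M mp; move: mp.
move=> /and5P [_ _ _ _ /and5P [n45 n67 _ _ _]] /and5P [_ _ _ _ /and5P [m45 m67 _ _ _]].
rewrite !inE => /orP [] /eqP -> /=; [move: n45 m45 | move: n67 m67];
  by case: (x _); case: (x _); case: (write_slots _ _ _ _); case: (write_slots _ _ _ _); auto.
Qed.

Lemma legal_write_slots (F : int * bool -> bool) (M : pred int) x lo (N : nat) :
  legal theta_pd (subword x lo N) ->
  (forall p, marker x p -> M p -> lo <= p /\ p + 12 <= lo + N%:Z) ->
  legal theta_pd (subword (write_slots F M x) lo N).
Proof.
move=> legal_x inside; apply: legal_swap_subword legal_x _ => i range neq.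
have [p [mp Mp /andP [p4 p7]]] := write_slots_neq neq.
have [lo_p hi_p] := inside p mp Mp.
have [q q_in [xq xq1]] := marker_bb mp.
have [d d_in i_d] : exists2 d : nat, d \in [:: 4; 6]%N & (i == p + d%:Z) || (i == p + d.+1%:Z).
  by exists (if i <= p + 5 then 4%N else 6%N); case: ifP => ? //; lia.
have [[yd yd1]|[yd yd1]] := write_slots_domino F M mp d_in.
  by move: neq; case/orP: i_d => /eqP ->; rewrite ?yd ?yd1 eqxx.
have succE (m : nat) : p + m%:Z + 1 = p + m.+1%:Z by lia.
have q_le : (q <= 7)%N by move: q_in; rewrite !inE; lia.
have d_le : (d <= 6)%N by move: d_in; rewrite !inE; lia.
exists (p + d%:Z), (p + q%:Z); rewrite !succE; split; try lia.
by split=> //; move: d_in q_in; rewrite !inE; lia.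
Qed.

Lemma legal_lift_aut phi x : RS_subshift theta_pd x -> RS_subshift theta_pd (lift_aut phi x).
Proof.
move=> legal_x i n.
pose M p := (i - 8 <= p) && (p <= i + n%:Z).
pose F s := phi (belt x s) 0.
have -> : subword (lift_aut phi x) i n = subword (write_slots F M x) i n.
  apply: (@eq_from_nth _ a) => [|j]; rewrite ?size_subword // => lt_jn.
  have Mq (q : nat) : (4 <= q <= 7)%N -> M (i + j%:Z - q%:Z) by rewrite /M; lia.
  by rewrite !nth_subword // /lift_aut /write_slots !Mq.
have -> : i = i - 12 + 12%:Z by rewrite subrK.
apply: legal_infix (infix_subword _ _ (_ : 12 + n <= n + 24)%N) _; first by lia.
by apply: legal_write_slots (legal_x _ _) _ => p mp /andP [lo hi]; lia.
Qed.

Definition periodic (s : seq letter) (i : int) : letter := nth a s `|(i %% (size s)%:Z)%Z|.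

Definition cell (t : bool) : seq letter :=
  [:: a; a; a; b; if t then b else a; if t then a else b; a; b; b; a; a; a].

Definition encode (beta : int -> bool) (i : int) : letter :=
  nth a (cell (beta (i %/ 12)%Z)) `|(i %% 12)%Z|.

Lemma periodic_at s Q (m : nat) : periodic s (Q * (size s)%:Z + m%:Z) = nth a s (m %% size s).
Proof. by rewrite /periodic modzMDl modz_nat. Qed.

Lemma encode_at beta Q (m : nat) :
  (m < 12)%N -> encode beta (Q * 12 + m%:Z) = nth a (cell (beta Q)) m.
Proof.
move=> lt_m12; rewrite /encode divzMDl // modzMDl divz_nat modz_nat divn_small // modn_small //.
by rewrite addr0.
Qed.

Lemma int_euclid (k : int) (n : nat) : (0 < n)%N ->
  exists Q (r : nat), k = Q * n%:Z + r%:Z /\ (r < n)%N.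
Proof.
move=> n_gt0; exists (k %/ n%:Z)%Z, `|(k %% n%:Z)%Z|%N.
by have := divz_eq k n%:Z; split; lia.
Qed.

(* encode beta desubstitutes to (baaaab)^Z, which desubstitutes to (aab)^Z,
   a fixed point of desubstitution. *)
Lemma legal_encode beta : RS_subshift theta_pd (encode beta).
Proof.
pose Y z := [\/ z = periodic [:: a; a; b], z = periodic [:: b; a; a; a; a; b]
              | exists beta, z = encode beta].
apply: (RS_subshift_of_desubstitution a size_theta_pd theta_pd_neq0 legal_theta_pd_short (Y := Y));
  last by apply: Or33; exists beta.
move=> z [->|->|[beta' ->]].
- exists (periodic [:: a; a; b]); first exact: Or31.
  exists 2 => k; have [Q [r [-> lt_r3]]] := int_euclid k (isT : (0 < 3)%N).
  have -> : 2 + 2 * (Q * 3%:Z + r%:Z) = (2 * Q) * 3%:Z + (2 + 2 * r)%N%:Z by lia.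
  have -> : (2 * Q) * 3%:Z + (2 + 2 * r)%N%:Z + 1 = (2 * Q) * 3%:Z + (3 + 2 * r)%N%:Z by lia.
  by rewrite -[3%:Z]/(size [:: a; a; b])%:Z !periodic_at; case: r lt_r3 => [|[|[|]]].
- exists (periodic [:: a; a; b]); first exact: Or31.
  exists 4 => k; have [Q [r [-> lt_r3]]] := int_euclid k (isT : (0 < 3)%N).
  have -> : 4 + 2 * (Q * 3%:Z + r%:Z) = Q * 6%:Z + (4 + 2 * r)%N%:Z by lia.
  have -> : Q * 6%:Z + (4 + 2 * r)%N%:Z + 1 = Q * 6%:Z + (5 + 2 * r)%N%:Z by lia.
  rewrite -[3%:Z]/(size [:: a; a; b])%:Z -[6%:Z]/(size [:: b; a; a; a; a; b])%:Z !periodic_at.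
  by case: r lt_r3 => [|[|[|]]].
- exists (periodic [:: b; a; a; a; a; b]); first exact: Or32.
  exists 0 => k; have [Q [r [-> lt_r6]]] := int_euclid k (isT : (0 < 6)%N).
  have -> : 0 + 2 * (Q * 6%:Z + r%:Z) = Q * 12 + (2 * r)%N%:Z by lia.
  have -> : Q * 12 + (2 * r)%N%:Z + 1 = Q * 12 + (2 * r).+1%:Z by lia.
  rewrite !encode_at; try lia.
  rewrite -[6%:Z]/((size [:: b; a; a; a; a; b])%:Z) periodic_at.
  by case: r lt_r6 => [|[|[|[|[|[|]]]]]] //= _; case: (beta' Q).
Qed.

Lemma marker_encode beta Q : marker (encode beta) (Q * 12).
Proof. by rewrite /marker !encode_at //; case: (beta Q). Qed.

Lemma iter_slot_succ_encode beta Q (n : nat) :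
  iter n (slot_succ (encode beta)) (Q * 12, true) = ((Q + n%:Z) * 12, true).
Proof.
elim: n => [|n IH] /=; first by rewrite addr0.
rewrite IH /slot_succ /=.
have -> : (Q + n%:Z) * 12 + 12 = (Q + n.+1%:Z) * 12 by lia.
by rewrite marker_encode.
Qed.

Lemma iter_slot_pred_encode beta Q (n : nat) :
  iter n (slot_pred (encode beta)) (Q * 12, true) = ((Q - n%:Z) * 12, true).
Proof.
elim: n => [|n IH] /=; first by rewrite subr0.
rewrite IH /slot_pred /=.
have -> : (Q - n%:Z) * 12 - 12 = (Q - n.+1%:Z) * 12 by lia.
by rewrite marker_encode.
Qed.

Lemma belt_encode beta : belt (encode beta) (0, true) = beta.
Proof.
apply: functional_extensionality => j; rewrite /belt /slot_bit -(mul0r 12).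
case: j => n /=.
- rewrite iter_slot_succ_encode /= encode_at // add0r.
  by case: (beta n).
- rewrite -/(iter n.+1 _ _) iter_slot_pred_encode /= encode_at // sub0r -NegzE.
  by case: (beta (Negz n)).
Qed.

Lemma lift_aut_encode phi beta : lift_aut phi (encode beta) 4%Z = if phi beta 0 then b else a.
Proof.
have m0 : marker (encode beta) 0 by rewrite -(mul0r 12); apply: marker_encode.
rewrite -(add0r 4%Z) /lift_aut (write_slots_marker _ _ (d := 4) m0) //= belt_encode.
by case: (phi beta 0).
Qed.

Lemma lift_aut_inj phi psi : {morph phi : z / shift z} -> {morph psi : z / shift z} ->
  (forall x, RS_subshift theta_pd x -> lift_aut phi x = lift_aut psi x) -> phi = psi.
Proof.
move=> phi_shift psi_shift eq_lift.
have at0 beta : phi beta 0 = psi beta 0.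
  have := congr1 (fun y => y 4%Z) (eq_lift _ (legal_encode beta)); rewrite /= !lift_aut_encode.
  by case: (phi beta 0); case: (psi beta 0).
apply: functional_extensionality => beta; apply: functional_extensionality => j.
have := congr1 (fun f => f 0) (morph_shift_translate phi_shift beta j).
have := congr1 (fun f => f 0) (morph_shift_translate psi_shift beta j).
by rewrite /= add0r => <- <-.
Qed.

Lemma is_aut_full_shift_morph phi : is_aut (@full_shift bool) phi -> {morph phi : z / shift z}.
Proof. by case=> _ phi_shift _ _ z; apply: phi_shift. Qed.

Lemma morph_shift_inv (phi g : (int -> bool) -> int -> bool) :
  {morph phi : z / shift z} -> cancel phi g -> cancel g phi -> {morph g : z / shift z}.
Proof. by move=> phi_shift gK phiK z; rewrite -{1}(phiK z) -phi_shift gK. Qed.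

Lemma is_aut_lift_aut phi :
  is_aut (@full_shift bool) phi -> is_aut (RS_subshift theta_pd) (lift_aut phi).
Proof.
move=> /[dup] /is_aut_full_shift_morph phi_shift [_ _ phi_cont [g [_ g_cont gK phiK]]].
have g_shift := morph_shift_inv phi_shift (fun z => gK z I) (fun z => phiK z I).
split.
- by move=> x /legal_lift_aut.
- by move=> x _; apply: lift_aut_shift.
- exact: lift_aut_continuous.
exists (lift_aut g); split.
- by move=> x /legal_lift_aut.
- exact: lift_aut_continuous.
- move=> x _; rewrite -lift_aut_comp // (_ : (fun z => g (phi z)) = id) ?lift_aut_id //.
  by apply: functional_extensionality => z; apply: gK.
- move=> x _; rewrite -lift_aut_comp // (_ : (fun z => phi (g z)) = id) ?lift_aut_id //.
  by apply: functional_extensionality => z; apply: phiK.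
Qed.

Theorem corollary6p13 :
  exists Phi : ((int -> bool) -> (int -> bool)) ->
               ((int -> letter) -> (int -> letter)),
    [/\ (forall phi, is_aut (@full_shift bool) phi ->
           is_aut (RS_subshift theta_pd) (Phi phi)),
        (forall phi psi, is_aut (@full_shift bool) phi ->
           is_aut (@full_shift bool) psi ->
           forall x, RS_subshift theta_pd x ->
             Phi (fun y => phi (psi y)) x = Phi phi (Phi psi x)) &
        (forall phi psi, is_aut (@full_shift bool) phi ->
           is_aut (@full_shift bool) psi ->
           (forall x, RS_subshift theta_pd x -> Phi phi x = Phi psi x) ->
           phi = psi)].
Proof.
exists lift_aut; split.
- exact: is_aut_lift_aut.
- by move=> phi psi _ /is_aut_full_shift_morph psi_shift x _; apply: lift_aut_comp.
- move=> phi psi /is_aut_full_shift_morph phi_shift /is_aut_full_shift_morph psi_shift.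
  exact: lift_aut_inj.
Qed.
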